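(* If a generalised binary matrix $\mathbf{Y}$ is minimally non-firm, then every row and every column of $\mathbf{Y}$ contains at least two non-zero entries (entries equal to $1$ or $?$).
   Context: A generalised binary matrix is a matrix with entries in $\{0,1,?\}$. For such $\mathbf{Y}$, $\mathrm{supp}(\mathbf{Y})=\{(i,j):y_{i,j}=1\}$. A submatrix indexed by $I\times J$ is obtained by deleting rows not in $I$ and columns not in $J$; it is proper if it omits at least one row or column. A rectangle of $\mathbf{Y}$ is a set $I\times J$ of positions containing no entry equal to $0$. An isolated set is a subset of $\mathrm{supp}(\mathbf{Y})$ no two distinct elements of which lie in a common rectangle; $i(\mathbf{Y})$ is the maximum size of an isolated set. $br(\mathbf{Y})$ is the minimum number of rectangles whose union contains $\mathrm{supp}(\mathbf{Y})$ ($?$ entries need not be covered). $\mathbf{Y}$ is minimally non-firm if $i(\mathbf{Y})<br(\mathbf{Y})$ and $i(\mathbf{Y}')=br(\mathbf{Y}')$ for every proper submatrix $\mathbf{Y}'$ of $\mathbf{Y}$. *)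

From mathcomp Require Import all_boot all_algebra.
Set Implicit Arguments. Unset Strict Implicit. Unset Printing Implicit Defensive.

(* Entries of a generalised binary matrix: 0, 1 or ? *)
Inductive gentry := GZero | GOne | GUnk.

Definition is_zero (e : gentry) : bool := if e is GZero then true else false.
Definition is_one (e : gentry) : bool := if e is GOne then true else false.

Definition gbm (m n : nat) := 'M[gentry]_(m, n).

Section GBM.
Variables (m n : nat).
Implicit Type Y : gbm m n.

Definition supp Y : {set 'I_m * 'I_n} := [set p | is_one (Y p.1 p.2)].

Definition is_rect Y (A : {set 'I_m}) (B : {set 'I_n}) : bool :=
  [forall i in A, forall j in B, ~~ is_zero (Y i j)].

Definition common_rect Y (p q : 'I_m * 'I_n) : bool :=
  [exists A : {set 'I_m}, exists B : {set 'I_n},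
     [&& is_rect Y A B, p.1 \in A, q.1 \in A, p.2 \in B & q.2 \in B]].

Definition isolated Y (S : {set 'I_m * 'I_n}) : bool :=
  (S \subset supp Y) &&
  [forall p in S, forall q in S, (p != q) ==> ~~ common_rect Y p q].

Definition iso_num Y : nat := \max_(S : {set 'I_m * 'I_n} | isolated Y S) #|S|.

Definition rect_cover Y (F : {set {set 'I_m} * {set 'I_n}}) : bool :=
  [forall R in F, is_rect Y R.1 R.2] &&
  [forall p in supp Y, exists R in F, (p.1 \in R.1) && (p.2 \in R.2)].

(* br(Y): minimum number of rectangles covering supp(Y).  The covering by
   1x1 rectangles has size #|supp Y|, so #|supp Y| is a valid default. *)
Definition br Y : nat :=
  \big[minn/#|supp Y|]_(F : {set {set 'I_m} * {set 'I_n}} | rect_cover Y F) #|F|.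

End GBM.

Definition submx_gbm (m n : nat) (Y : gbm m n) (I : {set 'I_m}) (J : {set 'I_n})
  : gbm #|I| #|J| :=
  (\matrix_(i, j) Y (enum_val i) (enum_val j))%R.

Definition proper_sub (m n : nat) (I : {set 'I_m}) (J : {set 'I_n}) : bool :=
  (I != setT) || (J != setT).

Definition minimally_non_firm (m n : nat) (Y : gbm m n) : Prop :=
  iso_num Y < br Y /\
  forall (I : {set 'I_m}) (J : {set 'I_n}), proper_sub I J ->
    iso_num (submx_gbm Y I J) = br (submx_gbm Y I J).

From Pilot Require Import Defs.
From mathcomp Require Import all_boot all_order all_algebra.
From mathcomp Require Import zify.
Set Implicit Arguments. Unset Strict Implicit. Unset Printing Implicit Defensive.

(* Suppose row i of a minimally non-firm Y has at most one non-zero entry.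
   If the row carries no 1, deleting it leaves supp Y untouched, so the
   resulting proper submatrix Z has i(Z) <= i(Y) and br(Y) <= br(Z).  If it
   carries a single 1, at (i, j), delete column j instead: (i, j) shares no
   rectangle with any 1 outside column j, so i(Z) + 1 <= i(Y), while the
   non-zero entries of column j form one rectangle covering its support, so
   br(Y) <= br(Z) + 1.  Either way i(Z) = br(Z) yields br(Y) <= i(Y).
   Columns follow by transposition. *)

Lemma one_nz (e : gentry) : is_one e -> ~~ is_zero e.
Proof. by case: e. Qed.

Lemma setC1_neqT (T : finType) (x : T) : [set~ x] != setT.
Proof. by apply/eqP=> /setP /(_ x); rewrite !inE eqxx. Qed.

Section Basics.
Variables (m n : nat) (Y : gbm m n).

Lemma isolatedP (S : {set 'I_m * 'I_n}) :
  reflect ((forall p, p \in S -> p \in supp Y) /\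
           (forall p q, p \in S -> q \in S -> p != q -> ~~ common_rect Y p q))
          (isolated Y S).
Proof.
apply: (iffP andP) => [[/subsetP sub /forallP iso]|[sub iso]]; split=> //.
- move=> p q pS qS; move/implyP: (iso p) => /(_ pS) /forallP /(_ q).
  by move/implyP => /(_ qS) /implyP.
- exact/subsetP.
- apply/forallP=> p; apply/implyP=> pS; apply/forallP=> q; apply/implyP=> qS.
  exact/implyP/iso.
Qed.

Lemma is_rectP (A : {set 'I_m}) (B : {set 'I_n}) :
  reflect (forall i j, i \in A -> j \in B -> ~~ is_zero (Y i j)) (is_rect Y A B).
Proof.
apply: (iffP forallP) => [rect i j iA jB|rect i].
  by move/implyP: (rect i) => /(_ iA) /forallP /(_ j) /implyP; apply.
by apply/implyP=> iA; apply/forallP=> j; apply/implyP; apply: rect.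
Qed.

Lemma common_rectC p q : common_rect Y p q = common_rect Y q p.
Proof.
by apply/existsP/existsP=> -[A /existsP [B /and5P [? ? ? ? ?]]];
  exists A; apply/existsP; exists B; apply/and5P.
Qed.

Lemma common_rect_nz p q : common_rect Y p q -> ~~ is_zero (Y p.1 q.2).
Proof. by case/existsP=> A /existsP [B /and5P [/is_rectP rect pA _ _ qB]]; apply: rect. Qed.

Lemma isolated0 : isolated Y set0.
Proof. by apply/isolatedP; split=> p; rewrite inE. Qed.

Lemma leq_iso_num S : isolated Y S -> #|S| <= iso_num Y.
Proof. exact: leq_bigmax_cond. Qed.

Lemma iso_num_attained : exists2 S, isolated Y S & #|S| = iso_num Y.
Proof.
have [|S S_iso max_S] := @eq_bigmax_cond _ (isolated Y) (fun S => #|S|).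
  by apply/card_gt0P; exists set0; apply: isolated0.
by exists S; rewrite // -max_S.
Qed.

Lemma br_leq_card F : rect_cover Y F -> br Y <= #|F|.
Proof. exact: (@Order.TotalTheory.bigmin_le_cond _ nat). Qed.

Lemma br_attained : exists2 F, rect_cover Y F & #|F| = br Y.
Proof.
rewrite /br; apply: (big_ind (fun k => exists2 F, rect_cover Y F & #|F| = k))
  => [|a b [F coverF <-] [G coverG <-]|F coverF].
- exists ((fun p : 'I_m * 'I_n => ([set p.1], [set p.2])) @: supp Y).
    apply/andP; split.
      apply/forall_inP=> _ /imsetP [p p_supp ->].
      apply/is_rectP=> i j; rewrite !inE => /eqP -> /eqP ->.
      by move: p_supp; rewrite inE => /one_nz.
    apply/forall_inP=> p p_supp; apply/exists_inP.
    by exists ([set p.1], [set p.2]); rewrite ?imset_f // /= !inE !eqxx.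
  by rewrite card_imset // => -[? ?] [? ?] [/set1_inj -> /set1_inj ->].
- by case: (leqP #|F| #|G|) => _; [exists F | exists G].
- by exists F.
Qed.

End Basics.

Section Submatrix.
Variables (m n : nat) (Y : gbm m n) (I : {set 'I_m}) (J : {set 'I_n}).
Local Notation Z := (submx_gbm Y I J).

Definition submx_pos (p : 'I_#|I| * 'I_#|J|) : 'I_m * 'I_n :=
  (enum_val p.1, enum_val p.2).

Lemma submx_gbmE a b : Z a b = Y (enum_val a) (enum_val b).
Proof. exact: mxE. Qed.

Lemma submx_pos_inj : injective submx_pos.
Proof. by move=> [a b] [c d] [] /= /enum_val_inj -> /enum_val_inj ->. Qed.

Lemma submx_pos_in p : (submx_pos p).1 \in I /\ (submx_pos p).2 \in J.
Proof. by split; apply: enum_valP. Qed.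

Lemma supp_submx p : (submx_pos p \in supp Y) = (p \in supp Z).
Proof. by rewrite !inE submx_gbmE. Qed.

Lemma common_rect_submx p q :
  common_rect Y (submx_pos p) (submx_pos q) -> common_rect Z p q.
Proof.
case/existsP=> A /existsP [B /and5P [/is_rectP rect pA qA pB qB]].
apply/existsP; exists [set a | enum_val a \in A].
apply/existsP; exists [set b | enum_val b \in B].
rewrite !inE pA qA pB qB !andbT.
by apply/is_rectP=> a b; rewrite !inE submx_gbmE; apply: rect.
Qed.

Lemma iso_num_submx_extend (X : {set 'I_m * 'I_n}) :
  isolated Y X ->
  (forall p, p \in X -> ~~ ((p.1 \in I) && (p.2 \in J))) ->
  (forall p q, p \in X -> q \in supp Z -> ~~ common_rect Y p (submx_pos q)) ->
  iso_num Z + #|X| <= iso_num Y.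
Proof.
move=> /isolatedP [X_supp X_iso] X_out X_sep.
have [S /isolatedP [S_supp S_iso] <-] := iso_num_attained Z.
have disj : submx_pos @: S :&: X = set0.
  apply/setP=> x; rewrite !inE; apply/negP=> /andP [/imsetP [p _ ->] /X_out].
  by have [-> ->] := submx_pos_in p.
have <- : #|submx_pos @: S :|: X| = #|S| + #|X|.
  by rewrite cardsU disj cards0 subn0 card_imset //; apply: submx_pos_inj.
apply/leq_iso_num/isolatedP; split=> [x|x y].
  by rewrite inE => /orP [/imsetP [p /S_supp pS ->]|/X_supp]; rewrite ?supp_submx.
rewrite !inE => /orP [/imsetP [p pS ->]|xX] /orP [/imsetP [q qS ->]|yX] xy.
- have pq : p != q by apply: contraNneq xy => ->.
  exact: contra (@common_rect_submx p q) (S_iso p q pS qS pq).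
- by rewrite common_rectC X_sep // S_supp.
- by rewrite X_sep // S_supp.
- exact: X_iso.
Qed.

Lemma br_submx_extend (G : {set {set 'I_m} * {set 'I_n}}) :
  [forall R in G, is_rect Y R.1 R.2] ->
  (forall p, p \in supp Y -> ~~ ((p.1 \in I) && (p.2 \in J)) ->
     exists2 R, R \in G & (p.1 \in R.1) && (p.2 \in R.2)) ->
  br Y <= br Z + #|G|.
Proof.
move=> /forall_inP G_rect G_cover.
have [F /andP [/forall_inP F_rect /forall_inP F_cover] <-] := br_attained Z.
pose lift (R : {set 'I_#|I|} * {set 'I_#|J|}) : {set 'I_m} * {set 'I_n} :=
  ([set enum_val a | a in R.1], [set enum_val b | b in R.2]).
suff cover : rect_cover Y (lift @: F :|: G).
  apply: leq_trans (br_leq_card cover) _.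
  by apply: leq_trans (leq_card_setU _ _) _; rewrite leq_add2r leq_imset_card.
apply/andP; split.
  apply/forall_inP=> R; rewrite inE => /orP [/imsetP [R' R'F ->]|]; last exact: G_rect.
  apply/is_rectP=> _ _ /imsetP [a aR' ->] /imsetP [b bR' ->].
  by rewrite -submx_gbmE; move/is_rectP: (F_rect R' R'F); apply.
apply/forall_inP=> p p_supp.
case pIJ: ((p.1 \in I) && (p.2 \in J)); last first.
  have [R RG pR] := G_cover p p_supp (negbT pIJ).
  by apply/exists_inP; exists R; rewrite // inE RG orbT.
case/andP: pIJ => p1I p2J.
pose q := (enum_rank_in p1I p.1, enum_rank_in p2J p.2).
have pq : submx_pos q = p by rewrite /submx_pos /= !enum_rankK_in // -surjective_pairing.
have /exists_inP [R RF /andP [q1R q2R]] : [exists R in F, (q.1 \in R.1) && (q.2 \in R.2)].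
  by apply: F_cover; rewrite -supp_submx pq.
by apply/exists_inP; exists (lift R); rewrite ?inE ?imset_f // -pq /= !imset_f.
Qed.

End Submatrix.

Lemma mnf_cover_exceeds_isolated m n (Y : gbm m n) (I : {set 'I_m}) (J : {set 'I_n})
    (X : {set 'I_m * 'I_n}) (G : {set {set 'I_m} * {set 'I_n}}) :
  minimally_non_firm Y -> Defs.proper_sub I J ->
  isolated Y X ->
  (forall p, p \in X -> ~~ ((p.1 \in I) && (p.2 \in J))) ->
  (forall p q, p \in X -> q \in supp (submx_gbm Y I J) ->
     ~~ common_rect Y p (submx_pos q)) ->
  [forall R in G, is_rect Y R.1 R.2] ->
  (forall p, p \in supp Y -> ~~ ((p.1 \in I) && (p.2 \in J)) ->
     exists2 R, R \in G & (p.1 \in R.1) && (p.2 \in R.2)) ->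
  #|X| < #|G|.
Proof.
move=> [non_firm firm_sub] IJ X_iso X_out X_sep G_rect G_cover.
have := iso_num_submx_extend X_iso X_out X_sep.
have := br_submx_extend G_rect G_cover.
by rewrite firm_sub //; lia.
Qed.

Section Transpose.
Variables (m n : nat) (Y : gbm m n).

Definition tr_pos (p : 'I_m * 'I_n) : 'I_n * 'I_m := (p.2, p.1).

Definition tr_rect (R : {set 'I_m} * {set 'I_n}) : {set 'I_n} * {set 'I_m} :=
  (R.2, R.1).

Lemma tr_pos_inj : injective tr_pos.
Proof. by move=> [? ?] [? ?] [-> ->]. Qed.

Lemma tr_rect_inj : injective tr_rect.
Proof. by move=> [? ?] [? ?] [-> ->]. Qed.

Lemma supp_tr p : (tr_pos p \in supp (trmx Y)) = (p \in supp Y).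
Proof. by rewrite !inE mxE. Qed.

Lemma is_rect_tr A B : is_rect Y A B -> is_rect (trmx Y) B A.
Proof. by move=> /is_rectP rect; apply/is_rectP=> j i jB iA; rewrite mxE rect. Qed.

Lemma common_rect_tr p q :
  common_rect (trmx Y) (tr_pos p) (tr_pos q) -> common_rect Y p q.
Proof.
case/existsP=> B /existsP [A /and5P [/is_rectP rect ? ? ? ?]].
apply/existsP; exists A; apply/existsP; exists B; apply/and5P; split=> //.
by apply/is_rectP=> i j iA jB; have := rect j i jB iA; rewrite mxE.
Qed.

Lemma iso_num_le_tr : iso_num Y <= iso_num (trmx Y).
Proof.
have [S /isolatedP [S_supp S_iso] <-] := iso_num_attained Y.
rewrite -(card_imset S tr_pos_inj); apply/leq_iso_num/isolatedP.
split=> [_ /imsetP [p pS ->]|_ _ /imsetP [p pS ->] /imsetP [q qS ->] pq].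
  by rewrite supp_tr S_supp.
apply: contra (@common_rect_tr p q) (S_iso p q pS qS _).
by apply: contraNneq pq => ->.
Qed.

Lemma br_tr_le : br (trmx Y) <= br Y.
Proof.
have [F /andP [/forall_inP F_rect /forall_inP F_cover] <-] := br_attained Y.
rewrite -(card_imset F tr_rect_inj); apply: br_leq_card; apply/andP; split.
  by apply/forall_inP=> _ /imsetP [R RF ->]; apply/is_rect_tr/F_rect.
apply/forall_inP=> -[j i]; rewrite -[(j, i)]/(tr_pos (i, j)) supp_tr.
move=> /F_cover /exists_inP [R RF /andP [iR jR]].
by apply/exists_inP; exists (tr_rect R); rewrite ?imset_f //; apply/andP.
Qed.

End Transpose.

Lemma iso_num_tr m n (Y : gbm m n) : iso_num (trmx Y) = iso_num Y.
Proof.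
by apply/eqP; rewrite eqn_leq iso_num_le_tr -{2}[Y]trmxK iso_num_le_tr.
Qed.

Lemma br_tr m n (Y : gbm m n) : br (trmx Y) = br Y.
Proof. by apply/eqP; rewrite eqn_leq br_tr_le -{1}[Y]trmxK br_tr_le. Qed.

Lemma submx_gbm_tr m n (Y : gbm m n) (I : {set 'I_m}) (J : {set 'I_n}) :
  submx_gbm (trmx Y) J I = trmx (submx_gbm Y I J).
Proof. by apply/matrixP=> a b; rewrite !mxE. Qed.

Lemma minimally_non_firm_tr m n (Y : gbm m n) :
  minimally_non_firm Y -> minimally_non_firm (trmx Y).
Proof.
move=> [non_firm firm_sub]; split; first by rewrite iso_num_tr br_tr.
move=> J I JI; rewrite submx_gbm_tr iso_num_tr br_tr firm_sub //.
by rewrite /Defs.proper_sub orbC.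
Qed.

Section Rows.
Variables (m n : nat) (Y : gbm m n).
Hypothesis mnf : minimally_non_firm Y.

Lemma mnf_row_has_one i : exists j, is_one (Y i j).
Proof.
apply/existsP; apply: contraT => no_one.
have := mnf_cover_exceeds_isolated (I := [set~ i]) (J := setT)
  (X := set0) (G := set0) mnf.
rewrite !cards0 ltnn; apply.
- by rewrite /Defs.proper_sub setC1_neqT.
- exact: isolated0.
- by move=> p; rewrite inE.
- by move=> p q; rewrite inE.
- by apply/forall_inP=> R; rewrite inE.
- move=> p; rewrite !inE andbT negbK => p_one /eqP p1.
  by case/existsP: no_one; exists p.2; rewrite -p1.
Qed.

Lemma mnf_row_second_nz i j0 :
  is_one (Y i j0) -> exists2 j, j != j0 & ~~ is_zero (Y i j).
Proof.
move=> one; suff /existsP [j /andP [? ?]] : [exists j, (j != j0) && ~~ is_zero (Y i j)].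
  by exists j.
apply: contraT; rewrite negb_exists => /forallP lonely.
pose col := [set k | ~~ is_zero (Y k j0)].
have := mnf_cover_exceeds_isolated (I := setT) (J := [set~ j0])
  (X := [set (i, j0)]) (G := [set (col, [set j0])]) mnf.
rewrite !cards1 ltnn; apply.
- by rewrite /Defs.proper_sub setC1_neqT orbT.
- apply/isolatedP; split=> [p|p q]; rewrite !inE => /eqP ->; first by [].
  by move=> /eqP ->; rewrite eqxx.
- by move=> p; rewrite !inE => /eqP -> /=; rewrite eqxx.
- move=> p q; rewrite inE => /eqP -> _; apply/negP => /common_rect_nz /=.
  have [_] := submx_pos_in q; rewrite !inE => q2.
  by have := lonely (submx_pos q).2; rewrite q2 => /negP.
- apply/forall_inP=> R; rewrite inE => /eqP ->.
  by apply/is_rectP=> k j; rewrite !inE => k_nz /eqP ->.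
- move=> p; rewrite !inE negbK => p_one /eqP p2; exists (col, [set j0]); rewrite ?inE //.
  by rewrite -p2 eqxx andbT one_nz.
Qed.

Lemma mnf_row_two_nz i : 1 < #|[set j | ~~ is_zero (Y i j)]|.
Proof.
have [j0 one] := mnf_row_has_one i.
have [j j_neq nz] := mnf_row_second_nz one.
by apply/card_gt1P; exists j, j0; rewrite !inE nz j_neq one_nz.
Qed.

End Rows.

Theorem lemma5 (m n : nat) (Y : gbm m n) :
  minimally_non_firm Y ->
  (forall i : 'I_m, 2 <= #|[set j : 'I_n | ~~ is_zero (Y i j)]|) /\
  (forall j : 'I_n, 2 <= #|[set i : 'I_m | ~~ is_zero (Y i j)]|).
Proof.
move=> mnf; split=> [i|j]; first exact: mnf_row_two_nz.
suff -> : [set i | ~~ is_zero (Y i j)] = [set i | ~~ is_zero (trmx Y j i)].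
  exact: mnf_row_two_nz (minimally_non_firm_tr mnf) j.
by apply/setP=> i; rewrite !inE mxE.
Qed.
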